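(* (Stride Lemma) Let $f,g\in\breve{\mathcal D}$ satisfy $g\lhd f$ and $\sigma(g)>0$. Then $f(\sigma(f)x)\le g(\sigma(g)x)$ for all $x\in[0,\frac1{\sigma(f)}]$ (i.e. $f_{[\sigma(f)]}\le g_{[\sigma(g)]}$), and $\sigma(g)\int f<\sigma(f)\int g$.
   Context: $\int f:=\int_0^1f(x)\,dx$. $\breve{\mathcal D}$: the set of continuous, convex, strictly decreasing $f\colon[0,1]\to[0,1]$ with $f(0)=1$, $f(1)=0$. Stride: $\sigma(g):=\sup\{\alpha\ge0:\ \alpha-x\le\alpha g(x)\ \forall x\in[0,1]\}\in[0,1]$. For $f$ and $a>0$, $f_{[a]}(x):=f(ax)$ on $[0,\frac1a]$; for $b>0$, $f_{[a]}-bg$ is considered on $[0,\min\{1,\frac1a\}]$. Sign switches: for continuous $\Delta\colon[c_0,d_0]\to\mathbb R$, a closed subinterval $[c,d]$ with $c_0<c\le d<d_0$ and $\Delta([c,d])=\{0\}$ is a sign switch if there is $\delta\in(0,\min\{c-c_0,d_0-d\}]$ with $\Delta(c-x)\Delta(d+x)<0$ for all $x\in(0,\delta]$; $\chi\Delta$ is their number. Crossing number $\chi(f,g):=\sup\{\chi(f_{[a]}-bg):a,b>0\}$. Domination $g\lhd f$: $\chi(f,g)=2$ and $g\le f$ pointwise. *)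

From Stdlib Require Import Reals List.
From Coquelicot Require Import Coquelicot.
Open Scope R_scope.

Definition I01 (x : R) : Prop := 0 <= x <= 1.

Definition Dbreve (f : R -> R) : Prop :=
  (forall x, I01 x -> filterlim f (within I01 (locally x)) (locally (f x))) /\
  (forall x y t, I01 x -> I01 y -> 0 <= t <= 1 ->
      f (t * x + (1 - t) * y) <= t * f x + (1 - t) * f y) /\
  (forall x y, I01 x -> I01 y -> x < y -> f y < f x) /\
  (forall x, I01 x -> 0 <= f x <= 1) /\
  f 0 = 1 /\ f 1 = 0.

Definition stride_set (g : R -> R) (alpha : R) : Prop :=
  0 <= alpha /\ forall x, I01 x -> alpha - x <= alpha * g x.

Definition stride (g : R -> R) : R := real (Lub_Rbar (stride_set g)).

Definition dil (f : R -> R) (a : R) : R -> R := fun x => f (a * x).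

Definition sign_switch (Delta : R -> R) (c0 d0 : R) (cd : R * R) : Prop :=
  let c := fst cd in let d := snd cd in
  c0 < c /\ c <= d /\ d < d0 /\
  (forall x, c <= x <= d -> Delta x = 0) /\
  exists delta, 0 < delta /\ delta <= Rmin (c - c0) (d0 - d) /\
    forall x, 0 < x <= delta -> Delta (c - x) * Delta (d + x) < 0.

Definition chi_ge (Delta : R -> R) (c0 d0 : R) (n : nat) : Prop :=
  exists l : list (R * R), List.length l = n /\ List.NoDup l /\
    List.Forall (sign_switch Delta c0 d0) l.

Definition crossing_ge (f g : R -> R) (n : nat) : Prop :=
  exists a b, 0 < a /\ 0 < b /\
    chi_ge (fun x => dil f a x - b * g x) 0 (Rmin 1 (/ a)) n.

(* chi(f,g) = n  (supremum over a,b > 0 of counts in N u {oo} equals n). *)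
Definition crossing_eq (f g : R -> R) (n : nat) : Prop :=
  crossing_ge f g n /\ ~ crossing_ge f g (S n).

Definition dominated (g f : R -> R) : Prop :=
  crossing_eq f g 2 /\ forall x, I01 x -> g x <= f x.

From Stdlib Require Import Reals Lra Classical List.
From Coquelicot Require Import Coquelicot.
Open Scope R_scope.

(* Write [h = f(a .) / g].  A sign switch of [f(a .) - b g] is a crossing of the level [b]
   by [h].  Since [f] and [g] are convex, the right derivative [(f'_+ g - f g'_+) / g^2] of
   [h] is right-continuous; hence wherever [h] decreases (or increases) between two points
   it does so strictly on some subinterval.  Nesting three such pieces, an alternating sign
   pattern of [f(a .) - b0 g] at four points yields a level crossed strictly three times,
   i.e. [chi(f,g) >= 3].

   If [f(sigma(f) x) > g(sigma(g) x)] for some [x], a dilation [a] slightly above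
   [sigma(f) / sigma(g)] keeps [f(a .)] above [g] at [sigma(g) x], while [a > sigma(f) /
   sigma(g)] and the definition of the strides give [f(a q) < g(q)] for small [q]; together
   with the values at [0] and [1/a] this is such an alternating pattern, contradicting
   [chi(f,g) = 2].  Equal strides would then force [f = g], for which two sign switches
   already give three.  The integral inequality follows by the substitution
   [x -> (sigma(g) / sigma(f)) x], the integral of [g] over [[sigma(g) / sigma(f), 1]] being
   positive. *)

(** * Continuous extension of the profiles *)

Definition clamp01 (x : R) : R := Rmax 0 (Rmin 1 x).

Lemma clamp01_I01 x : I01 (clamp01 x).
Proof. unfold clamp01, I01, Rmax, Rmin; repeat destruct Rle_dec; lra. Qed.

Lemma clamp01_id x : I01 x -> clamp01 x = x.
Proof. unfold clamp01, I01, Rmax, Rmin; repeat destruct Rle_dec; lra. Qed.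

Lemma clamp01_lipschitz x y : Rabs (clamp01 x - clamp01 y) <= Rabs (x - y).
Proof.
  unfold clamp01, Rmax, Rmin; repeat destruct Rle_dec;
  unfold Rabs; repeat destruct Rcase_abs; lra.
Qed.

(* [Dbreve] only constrains [f] on [[0,1]]; [ext01 f] extends it by constants, so that the
   pointwise continuity theory of [continuity_pt] applies. *)
Definition ext01 (f : R -> R) (x : R) : R := f (clamp01 x).

Lemma ext01_id f x : I01 x -> ext01 f x = f x.
Proof. intros Hx; unfold ext01; rewrite clamp01_id; auto. Qed.

Lemma continuity_pt_scale a x : continuity_pt (fun x => a * x) x.
Proof.
  apply continuity_pt_mult; [apply continuity_pt_const; intros ??; auto | apply continuity_pt_id].
Qed.

Lemma continuity_pt_ext01 f :
  (forall x, I01 x -> filterlim f (within I01 (locally x)) (locally (f x))) ->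
  forall x, continuity_pt (ext01 f) x.
Proof.
  intros Hf x eps Heps.
  destruct (proj1 (filterlim_locally f _) (Hf _ (clamp01_I01 x)) (mkposreal eps Heps))
    as [d Hd].
  exists d; split; [apply cond_pos|].
  intros y [_ Hy]; apply Hd; [|apply clamp01_I01].
  eapply Rle_lt_trans; [apply clamp01_lipschitz | exact Hy].
Qed.

Section Dbreve_facts.
Variable f : R -> R.
Hypothesis Hf : Dbreve f.

Lemma Dbreve_cont x : continuity_pt (ext01 f) x.
Proof. apply continuity_pt_ext01, Hf. Qed.

Lemma Dbreve_convex x y t : I01 x -> I01 y -> 0 <= t <= 1 ->
  f (t * x + (1 - t) * y) <= t * f x + (1 - t) * f y.
Proof. apply Hf. Qed.

Lemma Dbreve_decr x y : I01 x -> I01 y -> x < y -> f y < f x.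
Proof. apply Hf. Qed.

Lemma Dbreve_range x : I01 x -> 0 <= f x <= 1.
Proof. apply Hf. Qed.

Lemma Dbreve_0 : f 0 = 1.
Proof. apply Hf. Qed.

Lemma Dbreve_1 : f 1 = 0.
Proof. apply Hf. Qed.

Lemma Dbreve_nonincr x y : I01 x -> I01 y -> x <= y -> f y <= f x.
Proof.
  intros Hx Hy Hxy; destruct (Req_dec x y) as [->|]; [lra|].
  left; apply Dbreve_decr; auto; lra.
Qed.

Lemma Dbreve_pos x : 0 <= x < 1 -> 0 < f x.
Proof. intros Hx; rewrite <- Dbreve_1; apply Dbreve_decr; unfold I01; lra. Qed.

End Dbreve_facts.

(** * Convex functions and their slopes *)

Definition convex_on (p : R -> R) (A B : R) : Prop :=
  forall x y t, A <= x <= B -> A <= y <= B -> 0 <= t <= 1 ->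
    p (t * x + (1 - t) * y) <= t * p x + (1 - t) * p y.

Definition slope (p : R -> R) (x y : R) : R := (p y - p x) / (y - x).

Lemma slope_spec p x y : x <> y -> p y = p x + (y - x) * slope p x y.
Proof. intros; unfold slope; field; lra. Qed.

Lemma Rdiv_le_cross a b d1 d2 : 0 < d1 -> 0 < d2 -> a * d2 <= b * d1 -> a / d1 <= b / d2.
Proof.
  intros H1 H2 H.
  replace (a / d1) with ((a * d2) * / (d1 * d2)) by (field; lra).
  replace (b / d2) with ((b * d1) * / (d1 * d2)) by (field; lra).
  apply Rmult_le_compat_r; [left; apply Rinv_0_lt_compat; nra | exact H].
Qed.

Lemma Rdiv_lt_cross a b d1 d2 : 0 < d1 -> 0 < d2 -> a * d2 < b * d1 -> a / d1 < b / d2.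
Proof.
  intros H1 H2 H.
  replace (a / d1) with ((a * d2) * / (d1 * d2)) by (field; lra).
  replace (b / d2) with ((b * d1) * / (d1 * d2)) by (field; lra).
  apply Rmult_lt_compat_r; [apply Rinv_0_lt_compat; nra | exact H].
Qed.

Definition right_slope_limit (p : R -> R) (B w l : R) : Prop :=
  (forall y, w < y <= B -> l <= slope p w y) /\
  (forall e, 0 < e -> exists d, 0 < d /\ forall y, w < y < w + d -> slope p w y < l + e).

Section Convex.
Variables (p : R -> R) (A B : R).
Hypothesis Hp : convex_on p A B.

Lemma convex_three_point x y z : A <= x -> x < y -> y < z -> z <= B ->
  (z - x) * p y <= (z - y) * p x + (y - x) * p z.
Proof.
  intros Hx Hxy Hyz Hz.
  set (t := (z - y) / (z - x)).
  assert (Ht : 0 <= t <= 1).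
  { unfold t; split; [apply Rdiv_le_0_compat; lra|].
    apply Rmult_le_reg_r with (z - x); [lra|]; unfold Rdiv; rewrite Rmult_assoc, Rinv_l; lra. }
  pose proof (Hp x z t ltac:(lra) ltac:(lra) Ht) as H.
  replace (t * x + (1 - t) * z) with y in H by (unfold t; field; lra).
  apply (Rmult_le_compat_l (z - x)) in H; [|lra].
  replace ((z - x) * (t * p x + (1 - t) * p z)) with ((z - y) * p x + (y - x) * p z)
    in H by (unfold t; field; lra).
  exact H.
Qed.

Lemma slope_le_r x y z : A <= x -> x < y -> y < z -> z <= B -> slope p x y <= slope p x z.
Proof. intros; pose proof (convex_three_point x y z); unfold slope; apply Rdiv_le_cross; nra. Qed.

Lemma slope_le_l x y z : A <= x -> x < y -> y < z -> z <= B -> slope p x z <= slope p y z.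
Proof. intros; pose proof (convex_three_point x y z); unfold slope; apply Rdiv_le_cross; nra. Qed.

Lemma slope_le u v x y : A <= u -> u < v -> x < y -> y <= B -> u <= x -> v <= y ->
  slope p u v <= slope p x y.
Proof.
  intros Hu Huv Hxy HyB Hux Hvy; apply Rle_trans with (slope p u y).
  - destruct (Req_dec v y) as [->|]; [lra|]; apply slope_le_r; lra.
  - destruct (Req_dec u x) as [->|]; [lra|]; apply slope_le_l; lra.
Qed.

Lemma convex_right_deriv w : A < w < B -> exists l, right_slope_limit p B w l.
Proof.
  intros Hw.
  set (E := fun v => exists y, w < y <= B /\ v = - slope p w y).
  assert (Hb : bound E).
  { exists (- slope p A w); intros v [y [Hy ->]]; apply Ropp_le_contravar.
    apply Rle_trans with (slope p A y); [apply slope_le_r | apply slope_le_l]; lra. }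
  destruct (completeness E Hb) as [m [Hub Hlub]].
  { exists (- slope p w B), B; split; [lra | reflexivity]. }
  exists (- m); split.
  - intros y Hy; enough (- slope p w y <= m) by lra; apply Hub; exists y; auto.
  - intros e He.
    destruct (classic (exists y, w < y <= B /\ slope p w y < - m + e))
      as [[y0 [Hy0 Hs0]]|Hn].
    + exists (y0 - w); split; [lra|]; intros y Hy.
      apply Rle_lt_trans with (slope p w y0); [|exact Hs0].
      destruct (Req_dec y y0) as [->|]; [lra|]; apply slope_le_r; lra.
    + enough (m <= m - e) by lra; apply Hlub; intros v [y [Hy ->]].
      destruct (Rle_dec (- slope p w y) (m - e)); auto.
      exfalso; apply Hn; exists y; split; auto; lra.
Qed.

Lemma right_slope_limit_le w l x y : A <= w -> right_slope_limit p B w l ->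
  w <= x -> x < y -> y <= B -> l <= slope p x y.
Proof.
  intros HAw [Hl _] Hx Hxy Hy; apply Rle_trans with (slope p w y); [apply Hl; lra|].
  destruct (Req_dec x w) as [->|]; [lra|]; apply slope_le_l; lra.
Qed.

(* Uses [slope (w+d) (w+2d) = 2 slope w (w+2d) - slope w (w+d)]. *)
Lemma slope_near_right_deriv w l : A < w < B -> right_slope_limit p B w l ->
  forall e, 0 < e -> exists d, 0 < d /\
    forall x y, w <= x -> x < y -> y <= w + d -> slope p x y < l + e.
Proof.
  intros Hw [Hl Hlim] e He.
  destruct (Hlim (e / 2) ltac:(lra)) as [d0 [Hd0 Hd0s]].
  pose proof (Rmin_l (d0 / 3) ((B - w) / 2)); pose proof (Rmin_r (d0 / 3) ((B - w) / 2)).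
  set (d := Rmin (d0 / 3) ((B - w) / 2)) in *.
  assert (Hd : 0 < d) by (apply Rmin_pos; lra).
  exists d; split; [exact Hd|]; intros x y Hx Hxy Hy.
  assert (slope p x y <= slope p (w + d) (w + 2 * d)) by (apply slope_le; lra).
  assert (slope p (w + d) (w + 2 * d) = 2 * slope p w (w + 2 * d) - slope p w (w + d))
    by (unfold slope; field; lra).
  assert (slope p w (w + 2 * d) < l + e / 2) by (apply Hd0s; lra).
  assert (l <= slope p w (w + d)) by (apply Hl; lra).
  lra.
Qed.

End Convex.
Lemma convex_on_sub p A B A' B' : A <= A' -> B' <= B -> convex_on p A B -> convex_on p A' B'.
Proof. intros HA HB Hp x y t Hx Hy Ht; apply Hp; auto; lra. Qed.

Lemma convex_on_scale p a B C : 0 < a -> a * B <= C -> convex_on p 0 C ->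
  convex_on (fun x => p (a * x)) 0 B.
Proof.
  intros Ha HaB Hp x y t Hx Hy Ht.
  replace (a * (t * x + (1 - t) * y)) with (t * (a * x) + (1 - t) * (a * y)) by ring.
  apply Hp; auto; split; nra.
Qed.

Section Dbreve_ext01.
Variable f : R -> R.
Hypothesis Hf : Dbreve f.

Lemma Dbreve_ext01_convex : convex_on (ext01 f) 0 1.
Proof.
  intros x y t Hx Hy Ht; rewrite !ext01_id; try (unfold I01; nra).
  apply Dbreve_convex; auto.
Qed.

Lemma Dbreve_ext01_nonincr x y : x <= y -> ext01 f y <= ext01 f x.
Proof.
  intros Hxy; unfold ext01; apply Dbreve_nonincr; try apply clamp01_I01; auto.
  unfold clamp01, Rmax, Rmin; repeat destruct Rle_dec; lra.
Qed.

Lemma Dbreve_ext01_nonneg x : 0 <= ext01 f x.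
Proof. apply (Dbreve_range f Hf), clamp01_I01. Qed.

Lemma Dbreve_dil_convex a : 0 < a -> convex_on (fun x => ext01 f (a * x)) 0 (/ a).
Proof.
  intros Ha; apply convex_on_scale with 1; [exact Ha | | exact Dbreve_ext01_convex].
  rewrite Rinv_r; lra.
Qed.

Lemma Dbreve_dil_cont a x : continuity_pt (fun x => ext01 f (a * x)) x.
Proof.
  apply (continuity_pt_comp (fun x => a * x) (ext01 f));
    [apply continuity_pt_scale | apply Dbreve_cont, Hf].
Qed.

End Dbreve_ext01.

(** * Intermediate values and local monotonicity *)

Lemma Rmin3_pos a b c : 0 < a -> 0 < b -> 0 < c ->
  exists d, 0 < d /\ d <= a /\ d <= b /\ d <= c.
Proof.
  intros; exists (Rmin a (Rmin b c)); repeat split.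
  - repeat apply Rmin_pos; auto.
  - apply Rmin_l.
  - eapply Rle_trans; [apply Rmin_r | apply Rmin_l].
  - eapply Rle_trans; [apply Rmin_r | apply Rmin_r].
Qed.

Lemma continuity_pt_lt_near K w c : continuity_pt K w -> K w < c ->
  exists d, 0 < d /\ forall x, Rabs (x - w) < d -> K x < c.
Proof.
  intros HK Hc; destruct (HK (c - K w) ltac:(lra)) as [d [Hd Hx]].
  exists d; split; [exact Hd|]; intros x Hxw.
  destruct (Req_dec x w) as [->|Hne]; [exact Hc|].
  assert (Rabs (K x - K w) < c - K w)
    by (apply (Hx x); split; [split; [exact I | apply not_eq_sym, Hne] | exact Hxw]).
  apply Rabs_def2 in H; lra.
Qed.

Lemma continuity_pt_gt_near K w c : continuity_pt K w -> c < K w ->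
  exists d, 0 < d /\ forall x, Rabs (x - w) < d -> c < K x.
Proof.
  intros HK Hc.
  destruct (continuity_pt_lt_near (fun x => - K x) w (- c)) as [d [Hd Hx]];
    [apply continuity_pt_opp, HK | lra |].
  exists d; split; [exact Hd|]; intros x Hxw; specialize (Hx x Hxw); lra.
Qed.

(* Otherwise [K + e x], for small [e > 0], attains its maximum on [[s, t]] at some [M < t],
   contradicting local monotonicity at [M]. *)
Lemma le_of_locally_right_le K s t : s < t ->
  (forall x, s <= x <= t -> continuity_pt K x) ->
  (forall w, s <= w < t -> exists d, 0 < d /\ forall y, w < y < w + d -> y <= t -> K w <= K y) ->
  K s <= K t.
Proof.
  intros Hst Hc Hl; apply Rnot_lt_le; intros Hlt.
  set (e := (K s - K t) / (2 * (t - s))).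
  assert (He : 0 < e) by (unfold e; apply Rdiv_lt_0_compat; lra).
  destruct (continuity_ab_maj (fun x => K x + e * x) s t) as [M [HM HMst]]; [lra| |].
  { intros c Hcst; apply continuity_pt_plus; [apply Hc; lra | apply continuity_pt_scale]. }
  destruct (Req_dec M t) as [->|HMt].
  - specialize (HM s ltac:(lra)); assert (e * (t - s) = (K s - K t) / 2) by (unfold e; field; lra).
    lra.
  - destruct (Hl M ltac:(lra)) as [d [Hd Hy]].
    assert (0 < Rmin d (t - M)) by (apply Rmin_pos; lra).
    pose proof (Rmin_l d (t - M)); pose proof (Rmin_r d (t - M)).
    set (y := M + Rmin d (t - M) / 2).
    specialize (Hy y ltac:(unfold y; lra) ltac:(unfold y; lra)).
    specialize (HM y ltac:(unfold y; lra)); simpl in HM.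
    assert (e * M < e * y) by (apply Rmult_lt_compat_l; unfold y; lra).
    lra.
Qed.

Lemma first_hit_up k p r v : p < r -> (forall x, p <= x <= r -> continuity_pt k x) ->
  k p < v -> v <= k r ->
  exists t, p < t <= r /\ k t = v /\ forall z, p <= z < t -> k z < v.
Proof.
  intros Hpr Hc Hp Hr.
  set (T := fun x => p <= x <= r /\ forall z, p <= z <= x -> k z < v).
  assert (HTp : T p) by (split; [lra|]; intros z Hz; replace z with p by lra; exact Hp).
  destruct (completeness T) as [t [Hub Hlub]]; [exists r; intros x [Hx _]; lra | exists p; auto|].
  assert (Hpt : p <= t) by (apply Hub, HTp).
  assert (Htr : t <= r) by (apply Hlub; intros x [Hx _]; lra).
  assert (Hbelow : forall z, p <= z < t -> k z < v).
  { intros z Hz; destruct (classic (exists x, T x /\ z < x)) as [[x [[_ Hx] Hzx]]|Hn].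
    - apply Hx; lra.
    - enough (t <= z) by lra; apply Hlub; intros x Hx.
      apply Rnot_lt_le; intros Hzx; apply Hn; exists x; auto. }
  assert (Hge : v <= k t).
  { apply Rnot_lt_le; intros Hkt.
    destruct (Req_dec t r) as [->|Htr']; [lra|].
    destruct (continuity_pt_lt_near k t v (Hc t ltac:(lra)) Hkt) as [d [Hd Hnear]].
    pose proof (Rmin_l (t + d / 2) r); pose proof (Rmin_r (t + d / 2) r).
    set (x := Rmin (t + d / 2) r) in *.
    assert (Htx : t < x) by (apply Rmin_glb_lt; lra).
    enough (HTx : T x) by (specialize (Hub x HTx); lra).
    split; [lra|]; intros z Hz; destruct (Rlt_dec z t); [apply Hbelow; lra|].
    apply Hnear; rewrite Rabs_right; lra. }
  assert (Hpt' : p < t) by (destruct (Req_dec p t) as [<-|]; lra).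
  assert (Hle : k t <= v).
  { apply Rnot_lt_le; intros Hkt.
    destruct (continuity_pt_gt_near k t v (Hc t ltac:(lra)) Hkt) as [d [Hd Hnear]].
    pose proof (Rmax_l p (t - d / 2)); pose proof (Rmax_r p (t - d / 2)).
    set (z := Rmax p (t - d / 2)) in *.
    assert (z < t) by (apply Rmax_lub_lt; lra).
    assert (v < k z) by (apply Hnear; rewrite Rabs_left; lra).
    specialize (Hbelow z ltac:(lra)); lra. }
  exists t; repeat split; auto; lra.
Qed.

Lemma first_hit_down k p r v : p < r -> (forall x, p <= x <= r -> continuity_pt k x) ->
  v < k p -> k r <= v ->
  exists t, p < t <= r /\ k t = v /\ forall z, p <= z < t -> v < k z.
Proof.
  intros Hpr Hc Hp Hr.
  destruct (first_hit_up (fun x => - k x) p r (- v)) as [t [Ht [Hkt Hz]]]; try lra.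
  - intros x Hx; apply continuity_pt_opp; auto.
  - exists t; repeat split; try lra; intros z Hz'; specialize (Hz z Hz'); lra.
Qed.

Lemma last_hit_down k p r v : p < r -> (forall x, p <= x <= r -> continuity_pt k x) ->
  v <= k p -> k r < v ->
  exists s, p <= s < r /\ k s = v /\ forall z, s < z <= r -> k z < v.
Proof.
  intros Hpr Hc Hp Hr.
  destruct (first_hit_up (fun x => k (- x)) (- r) (- p) v) as [t [Ht [Hkt Hz]]];
    rewrite ?Ropp_involutive; try lra.
  - intros x Hx; apply (continuity_pt_comp Ropp k);
      [apply continuity_pt_opp, continuity_pt_id | apply Hc; lra].
  - exists (- t); repeat split; try lra; intros z Hz'.
    specialize (Hz (- z) ltac:(lra)); rewrite Ropp_involutive in Hz; exact Hz.
Qed.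

(** * Strictly monotone pieces of a ratio of convex functions *)

Section Ratio.
Variables (p q : R -> R) (A B : R).
Hypotheses (Hp : convex_on p A B) (Hq : convex_on q A B).
Hypothesis Hp_nonneg : forall x, A <= x <= B -> 0 <= p x.
Hypothesis Hq_nonincr : forall x y, A <= x -> x <= y -> y <= B -> q y <= q x.
Hypotheses (Hp_cont : forall x, continuity_pt p x) (Hq_cont : forall x, continuity_pt q x).

(* [p y q x - p x q y = (y - x) (slope p x y q x - p x slope q x y)]. *)
Lemma ratio_lt_of_slopes x y : x < y -> 0 < q x -> 0 < q y ->
  slope p x y * q x - p x * slope q x y < 0 -> p y / q y < p x / q x.
Proof.
  intros Hxy Hqx Hqy Hs; apply Rdiv_lt_cross; auto.
  rewrite (slope_spec p x y), (slope_spec q x y) by lra; nra.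
Qed.

Lemma ratio_decr_right_of w t lp lq : A < w < t -> t <= B ->
  (forall x, w <= x <= t -> 0 < q x) ->
  right_slope_limit p B w lp -> right_slope_limit q B w lq ->
  lp * q w - p w * lq < 0 ->
  exists d, 0 < d /\ w + d <= t /\
    forall x y, w <= x -> x < y -> y <= w + d -> p y / q y < p x / q x.
Proof.
  intros Hw HtB Hq0 Hlp Hlq HN.
  assert (Hqw : 0 < q w) by (apply Hq0; lra).
  set (e := - (lp * q w - p w * lq) / (2 * q w)).
  assert (He : 0 < e) by (unfold e; apply Rdiv_lt_0_compat; lra).
  destruct (slope_near_right_deriv p A B Hp w lp ltac:(lra) Hlp e He) as [dp [Hdp Hsp]].
  destruct (continuity_pt_lt_near (fun x => (lp + e) * q x - lq * p x) w 0)
    as [dF [HdF HF]].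
  { apply continuity_pt_minus; apply continuity_pt_mult; auto;
      apply continuity_pt_const; intros ??; auto. }
  { assert (e * q w = - (lp * q w - p w * lq) / 2) by (unfold e; field; lra). nra. }
  destruct (Rmin3_pos dp (dF / 2) (t - w)) as [d [Hd [Hd1 [Hd2 Hd3]]]]; try lra.
  exists d; repeat split; [lra | lra |]; intros x y Hx Hxy Hy.
  apply ratio_lt_of_slopes; [lra | apply Hq0; lra | apply Hq0; lra |].
  assert (slope p x y < lp + e) by (apply Hsp; lra).
  assert (lq <= slope q x y) by (apply (right_slope_limit_le q A B Hq w); auto; lra).
  assert ((lp + e) * q x - lq * p x < 0) by (apply HF; rewrite Rabs_right; lra).
  assert (0 < q x) by (apply Hq0; lra).
  assert (0 <= p x) by (apply Hp_nonneg; lra).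
  nra.
Qed.

Lemma right_deriv_ratio_neg w t e lp lq : A < w < t -> t <= B -> 0 < e ->
  (forall x, w <= x <= t -> 0 < q x) ->
  right_slope_limit p B w lp -> right_slope_limit q B w lq ->
  (forall d, 0 < d -> exists y, w < y < w + d /\ y <= t /\
     p y / q y + e * y < p w / q w + e * w) ->
  lp * q w - p w * lq < 0.
Proof.
  intros Hw HtB He Hq0 [Hlp _] [_ Hlq] Hdrop.
  assert (Hqw : 0 < q w) by (apply Hq0; lra).
  assert (Hqt : 0 < q t) by (apply Hq0; lra).
  assert (Hpw : 0 <= p w) by (apply Hp_nonneg; lra).
  set (eta := e * q w * q t / (2 * (p w + 1))).
  assert (Heta : 0 < eta)
    by (unfold eta; apply Rdiv_lt_0_compat; [repeat apply Rmult_lt_0_compat|]; lra).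
  destruct (Hlq eta Heta) as [dq [Hdq Hsq]].
  destruct (Hdrop dq Hdq) as [y [Hy [Hyt Hratio]]].
  assert (Hqy : 0 < q y) by (apply Hq0; lra).
  assert (Hqty : q t <= q y) by (apply Hq_nonincr; lra).
  assert (Hcp : lp <= slope p w y) by (apply Hlp; lra).
  assert (Hcq : slope q w y < lq + eta) by (apply Hsq; lra).
  assert (Hslopes : slope p w y * q w - p w * slope q w y < - e * q t * q w).
  { assert (Hcross : p y * q w - p w * q y < - e * (y - w) * q y * q w).
    { replace (p y / q y) with (p y * q w / (q y * q w)) in Hratio by (field; lra).
      replace (p w / q w) with (p w * q y / (q y * q w)) in Hratio by (field; lra).
      apply (Rmult_lt_compat_r (q y * q w)) in Hratio; [|nra].
      unfold Rdiv in Hratio; rewrite !Rmult_plus_distr_r, !Rmult_assoc, Rinv_l in Hratio by nra.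
      nra. }
    assert (Hyw : (y - w) * (slope p w y * q w - p w * slope q w y)
                  < (y - w) * (- e * q y * q w)).
    { replace ((y - w) * (slope p w y * q w - p w * slope q w y))
        with (p y * q w - p w * q y)
        by (rewrite (slope_spec p w y), (slope_spec q w y) by lra; ring).
      lra. }
    apply Rmult_lt_reg_l in Hyw; [|lra].
    assert (e * q t * q w <= e * q y * q w) by (apply Rmult_le_compat_r; [lra | nra]).
    lra. }
  assert (p w * eta <= e * q w * q t / 2).
  { unfold eta; replace (p w * (e * q w * q t / (2 * (p w + 1))))
      with (e * q w * q t / 2 * (p w / (p w + 1))) by (field; lra).
    assert (p w / (p w + 1) <= 1) by (apply Rmult_le_reg_r with (p w + 1); [lra|];
      unfold Rdiv; rewrite Rmult_assoc, Rinv_l; lra).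
    assert (0 < e * q w * q t / 2)
      by (apply Rdiv_lt_0_compat; [repeat apply Rmult_lt_0_compat|]; lra).
    nra. }
  assert (0 < e * q t * q w) by (repeat apply Rmult_lt_0_compat; lra).
  nra.
Qed.

(* If the ratio drops from [s] to [t], then [p/q + e x] is not locally non-decreasing to
   the right of some [w]; there the right derivative of [p/q] is negative, and by
   [ratio_decr_right_of] the ratio decreases strictly just right of [w]. *)
Lemma ratio_strict_decr_piece s t : A < s -> s < t -> t < B ->
  (forall x, s <= x <= t -> 0 < q x) -> p t / q t < p s / q s ->
  exists w w', s <= w < w' /\ w' <= t /\
    forall x y, w <= x -> x < y -> y <= w' -> p y / q y < p x / q x.
Proof.
  intros HAs Hst HtB Hq0 Hts.
  set (h := fun x => p x / q x).
  set (e := (h s - h t) / (2 * (t - s))).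
  assert (He : 0 < e) by (unfold e, h; apply Rdiv_lt_0_compat; lra).
  assert (Hw : exists w, s <= w < t /\ forall d, 0 < d ->
             exists y, w < y < w + d /\ y <= t /\ h y + e * y < h w + e * w).
  { apply NNPP; intros Hn.
    assert (Hle : h s + e * s <= h t + e * t).
    { apply (le_of_locally_right_le (fun x => h x + e * x)); [lra| |].
      - intros x Hx; apply continuity_pt_plus.
        + apply continuity_pt_div; auto; specialize (Hq0 x Hx); lra.
        + apply continuity_pt_scale.
      - intros w Hw; apply NNPP; intros Hnd; apply Hn; exists w; split; auto.
        intros d Hd; apply NNPP; intros Hny; apply Hnd; exists d; split; auto.
        intros y Hy Hyt; apply Rnot_lt_le; intros Hlt; apply Hny; exists y; auto. }
    assert (e * (t - s) = (h s - h t) / 2) by (unfold e; field; lra).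
    assert (h t < h s) by exact Hts.
    lra. }
  destruct Hw as [w [Hw Hdrop]].
  destruct (convex_right_deriv p A B Hp w ltac:(lra)) as [lp Hlp].
  destruct (convex_right_deriv q A B Hq w ltac:(lra)) as [lq Hlq].
  assert (Hqw : forall x, w <= x <= t -> 0 < q x) by (intros; apply Hq0; lra).
  assert (HN : lp * q w - p w * lq < 0)
    by (apply (right_deriv_ratio_neg w t e); auto; lra).
  destruct (ratio_decr_right_of w t lp lq) as [d [Hd [Hdt Hdecr]]]; auto; try lra.
  exists w, (w + d); repeat split; auto; lra.
Qed.

Lemma ratio_decr_piece_between a b v1 v2 : A <= a -> a < b -> b <= B ->
  (forall x, a <= x <= b -> 0 < q x) ->
  v1 < v2 -> v2 < p a / q a -> p b / q b < v1 ->
  exists w w', a <= w < w' /\ w' <= b /\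
    (forall x y, w <= x -> x < y -> y <= w' -> p y / q y < p x / q x) /\
    v1 <= p w' / q w' /\ p w / q w <= v2.
Proof.
  intros HAa Hab HbB Hq0 Hv Ha Hb.
  set (h := fun x => p x / q x).
  change (v2 < h a) in Ha; change (h b < v1) in Hb.
  assert (Hh : forall x, a <= x <= b -> continuity_pt h x).
  { intros x Hx; apply continuity_pt_div; auto; specialize (Hq0 x Hx); lra. }
  destruct (last_hit_down h a b v2 Hab Hh) as [s [Hs [Hhs Habove]]]; try lra.
  assert (Has : a < s) by (destruct (Req_dec a s) as [<-|]; lra).
  destruct (first_hit_down h s b v1) as [t [Ht [Hht Hbelow]]]; try lra.
  { intros x Hx; apply Hh; lra. }
  assert (Htb : t < b) by (destruct (Req_dec t b) as [->|]; lra).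
  destruct (ratio_strict_decr_piece s t) as [w [w' [Hw [Hw' Hdecr]]]]; try lra.
  { intros x Hx; apply Hq0; lra. }
  { change (h t < h s); lra. }
  exists w, w'; repeat split; try lra; [exact Hdecr | |].
  - change (v1 <= h w'); destruct (Req_dec w' t) as [->|]; [lra|].
    left; apply Hbelow; lra.
  - change (h w <= v2); destruct (Req_dec w s) as [->|]; [lra|].
    left; apply Habove; lra.
Qed.

End Ratio.

Lemma ratio_incr_piece_between (p q : R -> R) A B a b v1 v2 :
  convex_on p A B -> convex_on q A B ->
  (forall x, A <= x <= B -> 0 <= q x) ->
  (forall x y, A <= x -> x <= y -> y <= B -> p y <= p x) ->
  (forall x, continuity_pt p x) -> (forall x, continuity_pt q x) ->
  A <= a -> a < b -> b <= B ->
  (forall x, a <= x <= b -> 0 < p x) -> (forall x, a <= x <= b -> 0 < q x) ->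
  p a / q a < v1 -> v1 < v2 -> v2 < p b / q b ->
  exists w w', a <= w < w' /\ w' <= b /\
    (forall x y, w <= x -> x < y -> y <= w' -> p x / q x < p y / q y) /\
    v1 <= p w / q w /\ p w' / q w' <= v2.
Proof.
  intros Hp Hq Hq_nonneg Hp_nonincr Hp_cont Hq_cont HAa Hab HbB Hp0 Hq0 Ha Hv Hb.
  assert (Hinv : forall x, a <= x <= b -> q x / p x = / (p x / q x)).
  { intros x Hx; specialize (Hq0 x Hx); specialize (Hp0 x Hx); field; lra. }
  assert (Hpos : forall x, a <= x <= b -> 0 < p x / q x)
    by (intros; apply Rdiv_lt_0_compat; auto).
  assert (Hv1 : 0 < v1) by (specialize (Hpos a ltac:(lra)); lra).
  destruct (ratio_decr_piece_between q p A B Hq Hp Hq_nonneg Hp_nonincr Hq_cont Hp_cont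
              a b (/ v2) (/ v1)) as [w [w' [Hw [Hw' [Hdecr [Hvw' Hvw]]]]]]; auto.
  - apply Rinv_lt_contravar; nra.
  - rewrite Hinv by lra; apply Rinv_lt_contravar; [specialize (Hpos a ltac:(lra)); nra | lra].
  - rewrite Hinv by lra; apply Rinv_lt_contravar; [specialize (Hpos b ltac:(lra)); nra | lra].
  - exists w, w'; split; [exact Hw|]; split; [exact Hw'|]; split; [|split].
    + intros x y Hx Hxy Hy; specialize (Hdecr x y Hx Hxy Hy).
      rewrite !Hinv in Hdecr by lra.
      apply Rinv_lt_cancel; auto; apply Hpos; lra.
    + rewrite Hinv in Hvw by lra.
      assert (0 < p w / q w) by (apply Hpos; lra).
      apply Rnot_lt_le; intros Hlt; apply Rinv_lt_contravar in Hlt; [lra | nra].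
    + rewrite Hinv in Hvw' by lra.
      assert (0 < p w' / q w') by (apply Hpos; lra).
      apply Rnot_lt_le; intros Hlt; apply Rinv_lt_contravar in Hlt; [lra | nra].
Qed.

(** * Crossings and sign switches *)

Definition strictly_monotone_on (h : R -> R) (w w' : R) : Prop :=
  (forall x y, w <= x -> x < y -> y <= w' -> h y < h x) \/
  (forall x y, w <= x -> x < y -> y <= w' -> h x < h y).

Definition strict_crossing (h : R -> R) (L b u : R) : Prop :=
  h u = b /\ exists w w', 0 <= w < u /\ u < w' <= L /\ strictly_monotone_on h w w'.

Lemma strict_crossing_in_piece h L b w w' : 0 <= w -> w < w' -> w' <= L ->
  (forall x, 0 <= x <= L -> continuity_pt h x) -> strictly_monotone_on h w w' ->
  (h w - b) * (h w' - b) < 0 -> exists u, w < u < w' /\ strict_crossing h L b u.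
Proof.
  intros Hw Hww' HwL Hc Hmono Hb.
  assert (Hc' : forall x, w <= x <= w' -> continuity_pt h x) by (intros; apply Hc; lra).
  assert (Hu : exists u, w < u < w' /\ h u = b).
  { destruct (Rlt_dec (h w) b) as [Hlt|Hge].
    - assert (b < h w') by nra.
      destruct (first_hit_up h w w' b Hww' Hc') as [u [Hu [Hhu _]]]; try lra.
      exists u; split; [|exact Hhu]; split; [lra|].
      destruct (Req_dec u w') as [->|]; lra.
    - apply Rnot_lt_le in Hge.
      assert (h w' < b) by nra.
      assert (b < h w) by nra.
      destruct (first_hit_down h w w' b Hww' Hc') as [u [Hu [Hhu _]]]; try lra.
      exists u; split; [|exact Hhu]; split; [lra|].
      destruct (Req_dec u w') as [->|]; lra. }
  destruct Hu as [u [Hu Hhu]]; exists u; split; [exact Hu|].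
  split; [exact Hhu|]; exists w, w'; repeat split; auto; lra.
Qed.

Lemma three_strict_crossings h L b w1 w1' w2 w2' w3 w3' :
  0 <= w1 -> w1 < w1' -> w1' <= w2 -> w2 < w2' -> w2' <= w3 -> w3 < w3' -> w3' <= L ->
  (forall x, 0 <= x <= L -> continuity_pt h x) ->
  strictly_monotone_on h w1 w1' -> strictly_monotone_on h w2 w2' ->
  strictly_monotone_on h w3 w3' ->
  (h w1 - b) * (h w1' - b) < 0 -> (h w2 - b) * (h w2' - b) < 0 ->
  (h w3 - b) * (h w3' - b) < 0 ->
  exists u1 u2 u3, u1 < u2 < u3 /\
    strict_crossing h L b u1 /\ strict_crossing h L b u2 /\ strict_crossing h L b u3.
Proof.
  intros; destruct (strict_crossing_in_piece h L b w1 w1') as [u1 [Hu1 C1]]; auto; try lra.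
  destruct (strict_crossing_in_piece h L b w2 w2') as [u2 [Hu2 C2]]; auto; try lra.
  destruct (strict_crossing_in_piece h L b w3 w3') as [u3 [Hu3 C3]]; auto; try lra.
  exists u1, u2, u3; split; [split; lra | auto].
Qed.

Lemma sign_switch_of_strict_crossing (Delta psi h : R -> R) L b u :
  (forall z, 0 <= z <= L -> Delta z = psi z * (h z - b)) ->
  (forall z, 0 <= z <= L -> 0 < psi z) ->
  strict_crossing h L b u -> sign_switch Delta 0 L (u, u).
Proof.
  intros HD Hpsi [Hhu [w [w' [Hw [Hw' Hmono]]]]].
  unfold sign_switch; simpl; repeat split; try lra.
  - intros x Hx; replace x with u by lra; rewrite HD, Hhu by lra; ring.
  - pose proof (Rmin_l (u - w) (w' - u)); pose proof (Rmin_r (u - w) (w' - u)).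
    exists (Rmin (u - w) (w' - u)); split; [apply Rmin_pos; lra|]; split.
    + apply Rmin_glb; lra.
    + intros x Hx; rewrite !HD by lra.
      assert (0 < psi (u - x) * psi (u + x)) by (apply Rmult_lt_0_compat; apply Hpsi; lra).
      assert ((h (u - x) - b) * (h (u + x) - b) < 0).
      { destruct Hmono as [Hm|Hm].
        - assert (h u < h (u - x)) by (apply Hm; lra).
          assert (h (u + x) < h u) by (apply Hm; lra). nra.
        - assert (h (u - x) < h u) by (apply Hm; lra).
          assert (h u < h (u + x)) by (apply Hm; lra). nra. }
      replace (psi (u - x) * (h (u - x) - b) * (psi (u + x) * (h (u + x) - b)))
        with (psi (u - x) * psi (u + x) * ((h (u - x) - b) * (h (u + x) - b))) by ring.
      nra.
Qed.

Section Three_crossings.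
Variables (p q : R -> R) (L : R).
Hypotheses (Hp : convex_on p 0 L) (Hq : convex_on q 0 L).
Hypothesis Hp_nonneg : forall x, 0 <= x <= L -> 0 <= p x.
Hypotheses (Hp_nonincr : forall x y, 0 <= x -> x <= y -> y <= L -> p y <= p x)
           (Hq_nonincr : forall x y, 0 <= x -> x <= y -> y <= L -> q y <= q x).
Hypotheses (Hp_cont : forall x, continuity_pt p x) (Hq_cont : forall x, continuity_pt q x).
Hypotheses (Hp_pos : forall x, 0 <= x < L -> 0 < p x) (Hq_pos : forall x, 0 <= x <= L -> 0 < q x).

Let h x := p x / q x.

(* Pieces of strict monotonicity
   are chosen backwards (up on [q1,q2], then down on [q2,q3], then down on [q0,q1]), each
   with its range inside the previous one, so that one level [b] is crossed in all three. *)
Lemma ratio_three_crossings q0 q1 q2 q3 :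
  0 <= q0 -> q0 < q1 -> q1 < q2 -> q2 < q3 -> q3 <= L ->
  h q1 < h q0 -> h q1 < h q2 -> h q3 < h q0 -> h q3 < h q2 ->
  exists b, 0 < b /\ exists u1 u2 u3, u1 < u2 < u3 /\
    strict_crossing h L b u1 /\ strict_crossing h L b u2 /\ strict_crossing h L b u3.
Proof.
  intros H0 H01 H12 H23 H3 T10 T12 T30 T32.
  assert (Hh : forall x, 0 <= x <= L -> continuity_pt h x).
  { intros x Hx; apply continuity_pt_div; auto; specialize (Hq_pos x Hx); lra. }
  set (lo := Rmax (h q1) (h q3)); set (hi := Rmin (h q0) (h q2)).
  assert (h q1 <= lo /\ h q3 <= lo) by (split; [apply Rmax_l | apply Rmax_r]).
  assert (hi <= h q0 /\ hi <= h q2) by (split; [apply Rmin_l | apply Rmin_r]).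
  assert (lo < hi) by (apply Rmax_lub_lt; apply Rmin_glb_lt; auto).
  destruct (ratio_incr_piece_between p q 0 L q1 q2 ((2 * lo + hi) / 3) ((lo + 2 * hi) / 3)
              Hp Hq (fun x Hx => Rlt_le _ _ (Hq_pos x Hx)) Hp_nonincr Hp_cont Hq_cont)
    as [w1 [w1' [Hw1 [Hw1' [Hm1 [Hv1 Hv1']]]]]]; try lra.
  { intros x Hx; apply Hp_pos; lra. }
  { intros x Hx; apply Hq_pos; lra. }
  { change (h q1 < (2 * lo + hi) / 3); lra. }
  { change ((lo + 2 * hi) / 3 < h q2); lra. }
  change ((2 * lo + hi) / 3 <= h w1) in Hv1; change (h w1' <= (lo + 2 * hi) / 3) in Hv1'.
  assert (h w1 < h w1') by (apply Hm1; lra).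
  destruct (ratio_decr_piece_between p q 0 L Hp Hq Hp_nonneg Hq_nonincr Hp_cont Hq_cont
              q2 q3 (h w1) (h w1')) as [w2 [w2' [Hw2 [Hw2' [Hm2 [Hv2 Hv2']]]]]]; try lra.
  { intros x Hx; apply Hq_pos; lra. }
  { change (h w1' < h q2); lra. }
  { change (h q3 < h w1); lra. }
  change (h w1 <= h w2') in Hv2; change (h w2 <= h w1') in Hv2'.
  assert (h w2' < h w2) by (apply Hm2; lra).
  destruct (ratio_decr_piece_between p q 0 L Hp Hq Hp_nonneg Hq_nonincr Hp_cont Hq_cont
              q0 q1 (h w2') (h w2)) as [w3 [w3' [Hw3 [Hw3' [Hm3 [Hv3 Hv3']]]]]]; try lra.
  { intros x Hx; apply Hq_pos; lra. }
  { change (h w2 < h q0); lra. }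
  { change (h q1 < h w2'); lra. }
  change (h w2' <= h w3') in Hv3; change (h w3 <= h w2) in Hv3'.
  assert (h w3' < h w3) by (apply Hm3; lra).
  assert (0 <= h q1) by (apply Rdiv_le_0_compat; [apply Hp_nonneg | apply Hq_pos]; lra).
  exists ((h w3 + h w3') / 2); split; [lra|].
  apply (three_strict_crossings h L _ w3 w3' w1 w1' w2 w2'); auto; try lra; try nra.
  - left; exact Hm3.
  - right; exact Hm1.
  - left; exact Hm2.
Qed.

End Three_crossings.

Lemma NoDup_diag3 u1 u2 u3 : u1 < u2 < u3 -> NoDup ((u1, u1) :: (u2, u2) :: (u3, u3) :: nil).
Proof.
  intros Hu; repeat constructor; simpl; intros Hin;
    repeat (destruct Hin as [Heq|Hin]; [injection Heq; lra|]); exact Hin.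
Qed.

Lemma Dbreve_ratio_three_crossings f g a q0 q1 q2 q3 :
  Dbreve f -> Dbreve g -> 1 < a ->
  0 <= q0 -> q0 < q1 -> q1 < q2 -> q2 < q3 -> q3 <= / a ->
  let h x := ext01 f (a * x) / ext01 g x in
  h q1 < h q0 -> h q1 < h q2 -> h q3 < h q0 -> h q3 < h q2 ->
  exists b, 0 < b /\ exists u1 u2 u3, u1 < u2 < u3 /\
    strict_crossing h (/ a) b u1 /\ strict_crossing h (/ a) b u2 /\
    strict_crossing h (/ a) b u3.
Proof.
  intros Hf Hg Ha H0 H01 H12 H23 H3 h.
  assert (HL : 0 < / a < 1)
    by (split; [apply Rinv_0_lt_compat | rewrite <- Rinv_1; apply Rinv_lt_contravar]; lra).
  assert (HaL : a * / a = 1) by (apply Rinv_r; lra).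
  apply (ratio_three_crossings (fun x => ext01 f (a * x)) (ext01 g) (/ a)).
  - apply Dbreve_dil_convex; auto; lra.
  - apply convex_on_sub with 0 1; [lra | lra | apply Dbreve_ext01_convex, Hg].
  - intros x _; apply Dbreve_ext01_nonneg, Hf.
  - intros x y _ Hxy _; apply Dbreve_ext01_nonincr; auto; nra.
  - intros x y _ Hxy _; apply Dbreve_ext01_nonincr; auto.
  - apply Dbreve_dil_cont, Hf.
  - apply Dbreve_cont, Hg.
  - intros x Hx; rewrite ext01_id by (split; nra); apply (Dbreve_pos f Hf); split; nra.
  - intros x Hx; rewrite ext01_id by (split; lra); apply (Dbreve_pos g Hg); lra.
  - all: auto.
Qed.

(* Writing [f(a x) - b g(x) = g(x) (f(a x)/g(x) - b)], the sign pattern says that the ratio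
   goes down, up, down. *)
Lemma crossing_ge3_of_alternating f g a b0 q0 q1 q2 q3 :
  Dbreve f -> Dbreve g -> 1 < a -> 0 < b0 ->
  0 <= q0 -> q0 < q1 -> q1 < q2 -> q2 < q3 -> q3 <= / a ->
  0 < dil f a q0 - b0 * g q0 -> dil f a q1 - b0 * g q1 < 0 ->
  0 < dil f a q2 - b0 * g q2 -> dil f a q3 - b0 * g q3 < 0 ->
  crossing_ge f g 3.
Proof.
  intros Hf Hg Ha Hb0 H0 H01 H12 H23 H3 S0 S1 S2 S3.
  assert (HL : 0 < / a < 1)
    by (split; [apply Rinv_0_lt_compat | rewrite <- Rinv_1; apply Rinv_lt_contravar]; lra).
  assert (HaL : a * / a = 1) by (apply Rinv_r; lra).
  set (h := fun x => ext01 f (a * x) / ext01 g x).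
  assert (Hg0 : forall z, 0 <= z <= / a -> 0 < g z) by (intros; apply (Dbreve_pos g Hg); lra).
  assert (HD : forall b z, 0 <= z <= / a -> dil f a z - b * g z = g z * (h z - b)).
  { intros b z Hz; pose proof (Hg0 z Hz); unfold dil, h.
    rewrite !ext01_id by (split; nra); field; lra. }
  assert (Hsign : forall z, 0 <= z <= / a ->
            (0 < dil f a z - b0 * g z -> b0 < h z) /\ (dil f a z - b0 * g z < 0 -> h z < b0)).
  { intros z Hz; rewrite (HD b0 z Hz); pose proof (Hg0 z Hz); split; intros; nra. }
  assert (b0 < h q0) by (apply Hsign; auto; lra).
  assert (h q1 < b0) by (apply Hsign; auto; lra).
  assert (b0 < h q2) by (apply Hsign; auto; lra).
  assert (h q3 < b0) by (apply Hsign; auto; lra).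
  assert (T10 : h q1 < h q0) by lra; assert (T12 : h q1 < h q2) by lra.
  assert (T30 : h q3 < h q0) by lra; assert (T32 : h q3 < h q2) by lra.
  destruct (Dbreve_ratio_three_crossings f g a q0 q1 q2 q3 Hf Hg Ha H0 H01 H12 H23 H3
              T10 T12 T30 T32) as [b [Hb [u1 [u2 [u3 [Hu [C1 [C2 C3]]]]]]]].
  exists a, b; split; [lra|]; split; [exact Hb|].
  rewrite Rmin_right by lra.
  exists ((u1, u1) :: (u2, u2) :: (u3, u3) :: nil); split; [reflexivity|].
  split; [apply NoDup_diag3; exact Hu|].
  repeat apply Forall_cons; try apply Forall_nil;
    eapply sign_switch_of_strict_crossing; eauto; exact (HD b).
Qed.

Lemma sign_switch_opp Delta c0 d0 cd :
  sign_switch Delta c0 d0 cd -> sign_switch (fun x => - Delta x) c0 d0 cd.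
Proof.
  intros [Hc [Hcd [Hd [Hz [del [Hdel [Hdm Hp]]]]]]]; repeat split; auto.
  - intros x Hx; rewrite Hz; auto; lra.
  - exists del; repeat split; auto; intros x Hx; specialize (Hp x Hx); nra.
Qed.

Lemma no_sign_switch_of_nonneg Delta L cd :
  (forall x, 0 <= x <= L -> 0 <= Delta x) -> ~ sign_switch Delta 0 L cd.
Proof.
  intros H [Hc [Hcd [Hd [_ [del [Hdel [Hdm Hp]]]]]]].
  pose proof (Rmin_l (fst cd - 0) (L - snd cd)); pose proof (Rmin_r (fst cd - 0) (L - snd cd)).
  specialize (Hp del ltac:(lra)).
  assert (0 <= Delta (fst cd - del)) by (apply H; lra).
  assert (0 <= Delta (snd cd + del)) by (apply H; lra).
  nra.
Qed.

Lemma no_sign_switch_of_nonpos Delta L cd :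
  (forall x, 0 <= x <= L -> Delta x <= 0) -> ~ sign_switch Delta 0 L cd.
Proof.
  intros H HS; apply sign_switch_opp in HS; revert HS.
  apply no_sign_switch_of_nonneg; intros x Hx; specialize (H x Hx); lra.
Qed.

Lemma sign_switch_nonzero Delta c0 d0 c d : sign_switch Delta c0 d0 (c, d) ->
  exists del, 0 < del /\ forall x, 0 < x <= del -> Delta (c - x) <> 0 /\ Delta (d + x) <> 0.
Proof.
  intros [_ [_ [_ [_ [del [Hdel [_ Hp]]]]]]]; exists del; split; auto.
  intros x Hx; specialize (Hp x Hx); simpl in Hp; split; intros E; rewrite E in Hp; lra.
Qed.

Lemma sign_switch_left_lt Delta c0 d0 c1 d1 c2 d2 :
  sign_switch Delta c0 d0 (c1, d1) -> sign_switch Delta c0 d0 (c2, d2) ->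
  c1 < c2 -> d1 < c2.
Proof.
  intros S1 S2 Hc; apply Rnot_le_lt; intros Hcd.
  destruct S1 as [_ [_ [_ [Hz1 _]]]]; simpl in Hz1.
  destruct (sign_switch_nonzero _ _ _ _ _ S2) as [del [Hdel Hnz]].
  pose proof (Rmin_l del (c2 - c1)); pose proof (Rmin_r del (c2 - c1)).
  assert (0 < Rmin del (c2 - c1)) by (apply Rmin_pos; lra).
  apply (proj1 (Hnz (Rmin del (c2 - c1)) ltac:(lra))), Hz1; split; lra.
Qed.

Lemma sign_switch_same_left Delta c0 d0 c d1 d2 :
  sign_switch Delta c0 d0 (c, d1) -> sign_switch Delta c0 d0 (c, d2) -> d1 = d2.
Proof.
  assert (Hlt : forall d1 d2, sign_switch Delta c0 d0 (c, d1) ->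
                sign_switch Delta c0 d0 (c, d2) -> ~ d1 < d2).
  { intros e1 e2 S1 S2 He.
    destruct S2 as [_ [_ [_ [Hz2 _]]]]; simpl in Hz2.
    destruct (sign_switch_nonzero _ _ _ _ _ S1) as [del [Hdel Hnz]].
    pose proof (Rmin_l del (e2 - e1)); pose proof (Rmin_r del (e2 - e1)).
    assert (0 < Rmin del (e2 - e1)) by (apply Rmin_pos; lra).
    destruct S1 as [_ [Hce1 _]].
    apply (proj2 (Hnz (Rmin del (e2 - e1)) ltac:(lra))), Hz2; simpl in Hce1; split; lra. }
  intros S1 S2; destruct (Rtotal_order d1 d2) as [H|[H|H]]; auto.
  - exfalso; exact (Hlt _ _ S1 S2 H).
  - exfalso; exact (Hlt _ _ S2 S1 H).
Qed.

Lemma sign_switches_ordered Delta c0 d0 S1 S2 :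
  sign_switch Delta c0 d0 S1 -> sign_switch Delta c0 d0 S2 -> S1 <> S2 ->
  snd S1 < fst S2 \/ snd S2 < fst S1.
Proof.
  destruct S1 as [c1 d1], S2 as [c2 d2]; simpl; intros S1 S2 Hne.
  destruct (Rtotal_order c1 c2) as [H|[<-|H]].
  - left; exact (sign_switch_left_lt _ _ _ _ _ _ _ S1 S2 H).
  - exfalso; apply Hne; rewrite (sign_switch_same_left _ _ _ _ _ _ S1 S2); reflexivity.
  - right; exact (sign_switch_left_lt _ _ _ _ _ _ _ S2 S1 H).
Qed.

(* Points just outside two disjoint switches, together with [0] and [L], give six points
   whose signs change at least three times. *)
Lemma alternating_of_ordered_switches Delta L c1 d1 c2 d2 :
  sign_switch Delta 0 L (c1, d1) -> sign_switch Delta 0 L (c2, d2) -> d1 < c2 ->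
  0 < Delta 0 -> Delta L < 0 ->
  exists q0 q1 q2 q3, 0 <= q0 /\ q0 < q1 /\ q1 < q2 /\ q2 < q3 /\ q3 <= L /\
    0 < Delta q0 /\ Delta q1 < 0 /\ 0 < Delta q2 /\ Delta q3 < 0.
Proof.
  intros HS1 HS2 Hord H0 HL.
  destruct HS1 as [Hc1 [Hcd1 [Hd1 [_ [e1 [He1 [Hm1 Hp1]]]]]]].
  destruct HS2 as [Hc2 [Hcd2 [Hd2 [_ [e2 [He2 [Hm2 Hp2]]]]]]]; simpl in *.
  pose proof (Rmin_l (c1 - 0) (L - d1)); pose proof (Rmin_r (c1 - 0) (L - d1)).
  pose proof (Rmin_l (c2 - 0) (L - d2)); pose proof (Rmin_r (c2 - 0) (L - d2)).
  destruct (Rmin3_pos e1 e2 ((c2 - d1) / 3)) as [d [Hd [Hde1 [Hde2 Hdc]]]]; try lra.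
  set (x := d / 2).
  assert (P1 : Delta (c1 - x) * Delta (d1 + x) < 0) by (apply Hp1; unfold x; lra).
  assert (P2 : Delta (c2 - x) * Delta (d2 + x) < 0) by (apply Hp2; unfold x; lra).
  assert (0 < c1 - x /\ c1 - x < d1 + x /\ d1 + x < c2 - x /\ c2 - x < d2 + x /\ d2 + x < L)
    by (unfold x; lra).
  destruct (Rlt_dec 0 (Delta (c1 - x))) as [s1|s1];
    destruct (Rlt_dec 0 (Delta (c2 - x))) as [s2|s2].
  - exists (c1 - x), (d1 + x), (c2 - x), (d2 + x); repeat split; try lra; nra.
  - assert (Delta (c2 - x) < 0) by (destruct (Req_dec (Delta (c2 - x)) 0) as [E|];
      [rewrite E in P2; lra | lra]).
    exists (c1 - x), (d1 + x), (d2 + x), L; repeat split; try lra; nra.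
  - assert (Delta (c1 - x) < 0) by (destruct (Req_dec (Delta (c1 - x)) 0) as [E|];
      [rewrite E in P1; lra | lra]).
    exists 0, (c1 - x), (d1 + x), (d2 + x); repeat split; try lra; nra.
  - assert (Delta (c1 - x) < 0) by (destruct (Req_dec (Delta (c1 - x)) 0) as [E|];
      [rewrite E in P1; lra | lra]).
    exists 0, (c1 - x), (d1 + x), L; repeat split; try lra; nra.
Qed.

Lemma alternating_of_two_switches Delta L S1 S2 :
  sign_switch Delta 0 L S1 -> sign_switch Delta 0 L S2 -> S1 <> S2 ->
  0 < Delta 0 -> Delta L < 0 ->
  exists q0 q1 q2 q3, 0 <= q0 /\ q0 < q1 /\ q1 < q2 /\ q2 < q3 /\ q3 <= L /\
    0 < Delta q0 /\ Delta q1 < 0 /\ 0 < Delta q2 /\ Delta q3 < 0.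
Proof.
  intros HS1 HS2 Hne; destruct (sign_switches_ordered _ _ _ _ _ HS1 HS2 Hne) as [Ho|Ho];
    destruct S1 as [c1 d1], S2 as [c2 d2]; simpl in Ho.
  - apply (alternating_of_ordered_switches _ _ _ _ _ _ HS1 HS2 Ho).
  - apply (alternating_of_ordered_switches _ _ _ _ _ _ HS2 HS1 Ho).
Qed.

Lemma two_sign_switches Delta c0 d0 : chi_ge Delta c0 d0 2 ->
  exists S1 S2, S1 <> S2 /\ sign_switch Delta c0 d0 S1 /\ sign_switch Delta c0 d0 S2.
Proof.
  intros [l [Hlen [Hnd Hall]]]; destruct l as [|S1 [|S2 [|S3 l]]]; try discriminate.
  exists S1, S2; split.
  - intros <-; apply NoDup_cons_iff in Hnd; apply (proj1 Hnd); left; reflexivity.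
  - split; [exact (Forall_inv Hall) | exact (Forall_inv (Forall_inv_tail Hall))].
Qed.

(* For [a < 1] the substitution [y = a x] turns [b g(x) - f(a x)] into
   [b (f(y/a) - g(y)/b)] when [f = g]. *)
Lemma crossing_ge3_of_alternating_lt1 f g a b q0 q1 q2 q3 :
  Dbreve f -> Dbreve g -> (forall x, I01 x -> f x = g x) -> 0 < a < 1 -> 0 < b ->
  0 <= q0 -> q0 < q1 -> q1 < q2 -> q2 < q3 -> q3 <= 1 ->
  0 < b * g q0 - dil f a q0 -> b * g q1 - dil f a q1 < 0 ->
  0 < b * g q2 - dil f a q2 -> b * g q3 - dil f a q3 < 0 ->
  crossing_ge f g 3.
Proof.
  intros Hf Hg Hfg Ha Hb H0 H01 H12 H23 H3 S0 S1 S2 S3.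
  assert (Hsub : forall q, 0 <= q <= 1 ->
            dil f (/ a) (a * q) - / b * g (a * q) = / b * (b * g q - dil f a q)).
  { intros q Hq; unfold dil; replace (/ a * (a * q)) with q by (field; lra).
    rewrite (Hfg q), <- (Hfg (a * q)) by (unfold I01; split; nra); field; lra. }
  assert (0 < / b) by (apply Rinv_0_lt_compat; lra).
  assert (1 < / a) by (rewrite <- Rinv_1; apply Rinv_lt_contravar; lra).
  apply (crossing_ge3_of_alternating f g (/ a) (/ b) (a * q0) (a * q1) (a * q2) (a * q3));
    auto; try nra; rewrite ?Rinv_inv, ?Hsub by lra; nra.
Qed.

Section Equal_profiles.
Variables f g : R -> R.
Hypotheses (Hf : Dbreve f) (Hg : Dbreve g) (Hfg : forall x, I01 x -> f x = g x).

Lemma crossing_ge3_of_switches_gt1 a b S1 S2 : 1 < a -> 0 < b -> S1 <> S2 ->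
  sign_switch (fun x => dil f a x - b * g x) 0 (/ a) S1 ->
  sign_switch (fun x => dil f a x - b * g x) 0 (/ a) S2 ->
  crossing_ge f g 3.
Proof.
  intros Ha Hb Hne HS1 HS2.
  assert (HL : 0 < / a < 1)
    by (split; [apply Rinv_0_lt_compat | rewrite <- Rinv_1; apply Rinv_lt_contravar]; lra).
  destruct (Rle_dec 1 b).
  - exfalso; refine (no_sign_switch_of_nonpos _ (/ a) S1 _ HS1); intros x Hx; unfold dil.
    assert (Hax : 0 <= a * x <= 1)
      by (split; [nra|]; rewrite <- (Rinv_r a) by lra; apply Rmult_le_compat_l; lra).
    assert (Hx1 : I01 x) by (split; lra).
    assert (f (a * x) <= f x) by (apply (Dbreve_nonincr f); auto; destruct Hx; nra).
    pose proof (Dbreve_range g Hg x Hx1); rewrite <- (Hfg x Hx1) in *; nra.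
  - destruct (alternating_of_two_switches (fun x => dil f a x - b * g x) (/ a) S1 S2)
      as [q0 [q1 [q2 [q3 [O0 [O1 [O2 [O3 [O4 [P0 [P1 [P2 P3]]]]]]]]]]]]; auto; unfold dil.
    + rewrite Rmult_0_r, (Dbreve_0 f Hf), (Dbreve_0 g Hg); lra.
    + rewrite Rinv_r, (Dbreve_1 f Hf) by lra.
      pose proof (Dbreve_pos g Hg (/ a) ltac:(lra)); nra.
    + apply (crossing_ge3_of_alternating f g a b q0 q1 q2 q3); auto; lra.
Qed.

Lemma crossing_ge3_of_switches_lt1 a b S1 S2 : 0 < a < 1 -> 0 < b -> S1 <> S2 ->
  sign_switch (fun x => dil f a x - b * g x) 0 1 S1 ->
  sign_switch (fun x => dil f a x - b * g x) 0 1 S2 ->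
  crossing_ge f g 3.
Proof.
  intros Ha Hb Hne HS1 HS2.
  destruct (Rle_dec b 1).
  - exfalso; refine (no_sign_switch_of_nonneg _ 1 S1 _ HS1); intros x Hx; unfold dil.
    assert (Hax : I01 (a * x)) by (destruct Hx; split; nra).
    assert (f x <= f (a * x)) by (apply (Dbreve_nonincr f); auto; destruct Hx; nra).
    pose proof (Dbreve_range g Hg x Hx); rewrite <- (Hfg x Hx) in *; nra.
  - destruct (alternating_of_two_switches (fun x => - (dil f a x - b * g x)) 1 S1 S2)
      as [q0 [q1 [q2 [q3 [O0 [O1 [O2 [O3 [O4 [P0 [P1 [P2 P3]]]]]]]]]]]];
      try apply sign_switch_opp; auto; unfold dil in *.
    + rewrite Rmult_0_r, (Dbreve_0 f Hf), (Dbreve_0 g Hg); lra.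
    + rewrite Rmult_1_r, (Dbreve_1 g Hg); pose proof (Dbreve_pos f Hf a ltac:(lra)); lra.
    + apply (crossing_ge3_of_alternating_lt1 f g a b q0 q1 q2 q3); unfold dil; auto; lra.
Qed.

Lemma crossing_ge3_of_ge2_eq : crossing_ge f g 2 -> crossing_ge f g 3.
Proof.
  intros [a [b [Ha [Hb Hchi]]]].
  destruct (two_sign_switches _ _ _ Hchi) as [S1 [S2 [Hne [HS1 HS2]]]].
  destruct (Rtotal_order a 1) as [Hlt|[->|Hgt]].
  - rewrite Rmin_left in HS1, HS2
      by (rewrite <- Rinv_1; left; apply Rinv_lt_contravar; lra).
    apply (crossing_ge3_of_switches_lt1 a b S1 S2); auto.
  - exfalso; rewrite Rinv_1, Rmin_left in HS1 by lra.
    assert (HD : forall x, 0 <= x <= 1 -> dil f 1 x - b * g x = (1 - b) * g x)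
      by (intros x Hx; unfold dil; rewrite Rmult_1_l, (Hfg x Hx); ring).
    destruct (Rle_dec b 1); [refine (no_sign_switch_of_nonneg _ 1 S1 _ HS1)
                             | refine (no_sign_switch_of_nonpos _ 1 S1 _ HS1)];
      intros x Hx; rewrite HD by auto; pose proof (Dbreve_range g Hg x Hx); nra.
  - rewrite Rmin_right in HS1, HS2
      by (rewrite <- Rinv_1; left; apply Rinv_lt_contravar; lra).
    apply (crossing_ge3_of_switches_gt1 a b S1 S2); auto.
Qed.

End Equal_profiles.

(** * Strides *)

Lemma stride_spec g : Dbreve g ->
  stride_set g (stride g) /\ forall al, stride_set g al -> al <= stride g.
Proof.
  intros Hg.
  assert (Hbound : forall al, stride_set g al -> al <= 1).
  { intros al [_ H]; specialize (H 1 ltac:(unfold I01; lra)); rewrite (Dbreve_1 g Hg) in H; lra. }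
  assert (H0 : stride_set g 0) by (split; [lra | intros x Hx; destruct Hx; lra]).
  destruct (completeness (stride_set g)) as [m [Hub Hlub]];
    [exists 1; intros al Hal; auto | exists 0; auto |].
  replace (stride g) with m.
  2: { unfold stride; rewrite (is_lub_Rbar_unique (stride_set g) (Finite m)); [reflexivity|].
       split; [intros x Hx; apply Hub; auto|].
       intros [b| |] Hb; simpl;
         [apply Hlub; intros x Hx; exact (Hb x Hx) | exact I | exact (Hb 0 H0)]. }
  assert (Hm : 0 <= m) by (apply Hub, H0).
  split; [split|]; [exact Hm | | exact Hub].
  intros x Hx; apply Rnot_lt_le; intros Hlt.
  assert (Hgx : 0 < 1 - g x) by (destruct Hx; nra).
  assert (Hmx : m <= x / (1 - g x)).
  { apply Hlub; intros al [_ Hal]; specialize (Hal x Hx).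
    apply Rmult_le_reg_r with (1 - g x); auto; unfold Rdiv; rewrite Rmult_assoc, Rinv_l; lra. }
  assert (m * (1 - g x) <= x).
  { apply (Rmult_le_compat_r (1 - g x)) in Hmx; [|lra].
    unfold Rdiv in Hmx; rewrite Rmult_assoc, Rinv_l in Hmx; lra. }
  lra.
Qed.

Lemma stride_nonneg g : Dbreve g -> 0 <= stride g.
Proof. intros Hg; apply (proj1 (proj1 (stride_spec g Hg))). Qed.

Lemma stride_le_of_le f g : Dbreve f -> Dbreve g -> (forall x, I01 x -> g x <= f x) ->
  stride g <= stride f.
Proof.
  intros Hf Hg Hgf; destruct (stride_spec g Hg) as [[H0 Hs] _].
  apply (stride_spec f Hf); split; auto; intros x Hx.
  specialize (Hs x Hx); specialize (Hgf x Hx); nra.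
Qed.

(* Take [stride f < al < a stride g]; a point [t1] violating the stride condition of [f] at
   [al] and the chord of [f] from [0] push [f] below [1 - y/al] near [0], while [g] stays
   above [1 - q/stride g]. *)
Lemma exists_small_dil_lt f g a eps : Dbreve f -> Dbreve g -> 0 < a -> stride f < a * stride g ->
  0 < eps <= 1 -> exists q, 0 < q <= eps /\ f (a * q) < g q.
Proof.
  intros Hf Hg Ha Hsfg Heps.
  pose proof (stride_nonneg f Hf) as Hsf.
  destruct (stride_spec g Hg) as [[Hsg0 Hsg] _].
  assert (Hsg_pos : 0 < stride g) by nra.
  set (al := (stride f + a * stride g) / 2).
  assert (Hviol : exists t1, I01 t1 /\ al * f t1 < al - t1).
  { apply NNPP; intros Hn.
    assert (Hset : stride_set f al).
    { split; [unfold al; lra|]; intros y Hy; apply Rnot_lt_le; intros Hlt.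
      apply Hn; exists y; split; auto; lra. }
    apply (stride_spec f Hf) in Hset; unfold al in Hset; lra. }
  destruct Hviol as [t1 [Ht1 Hft1]].
  assert (Ht1_pos : 0 < t1).
  { destruct Ht1 as [[Hlt|<-] _]; auto; rewrite (Dbreve_0 f Hf) in Hft1; lra. }
  pose proof (Rmin_l (t1 / a) eps); pose proof (Rmin_r (t1 / a) eps).
  set (q := Rmin (t1 / a) eps) in *.
  assert (Hq : 0 < q) by (apply Rmin_pos; [apply Rdiv_lt_0_compat|]; lra).
  assert (Hy : a * q <= t1)
    by (replace t1 with (a * (t1 / a)) by (field; lra); apply Rmult_le_compat_l; lra).
  assert (Hchord : a * q * (1 - f t1) <= t1 * (1 - f (a * q))).
  { destruct (Req_dec (a * q) t1) as [->|Hne]; [lra|].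
    pose proof (convex_three_point f 0 1 (Dbreve_convex f Hf) 0 (a * q) t1) as H3.
    rewrite (Dbreve_0 f Hf) in H3; destruct Ht1.
    specialize (H3 ltac:(lra) ltac:(nra) ltac:(lra) ltac:(lra)).
    lra. }
  assert (Hfy : al * f (a * q) < al - a * q).
  { assert (0 < al) by (unfold al; lra).
    assert (a * q * t1 < al * a * q * (1 - f t1)) by (assert (0 < a * q) by nra; nra).
    nra. }
  assert (Hgq : stride g - q <= stride g * g q) by (apply Hsg; split; lra).
  exists q; split; [lra|].
  assert (Hratio : al * q < a * q * stride g) by (unfold al; nra).
  assert (Hal : 0 < al) by (unfold al; lra).
  assert (Hf' : al * stride g * f (a * q) < al * stride g - a * q * stride g) by nra.
  assert (Hg' : al * stride g - al * q <= al * stride g * g q) by nra.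
  apply (Rmult_lt_reg_l (al * stride g)); nra.
Qed.

Lemma crossing_ge3_of_dil_gt f g a x0 : Dbreve f -> Dbreve g -> 1 < a ->
  stride f < a * stride g -> 0 < x0 < / a -> g x0 < f (a * x0) -> crossing_ge f g 3.
Proof.
  intros Hf Hg Ha Hs Hx0 Hgf.
  assert (HL : / a < 1) by (rewrite <- Rinv_1; apply Rinv_lt_contravar; lra).
  assert (Hax0 : a * x0 < 1) by (rewrite <- (Rinv_r a) by lra; apply Rmult_lt_compat_l; lra).
  destruct (exists_small_dil_lt f g a (x0 / 2) Hf Hg ltac:(lra) Hs ltac:(split; lra))
    as [q1 [Hq1 Hfq1]].
  assert (Hgq1 : 0 < g q1) by (apply (Dbreve_pos g Hg); lra).
  assert (Hfaq1 : 0 <= f (a * q1)) by (apply (Dbreve_range f Hf); split; nra).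
  set (b0 := (1 + f (a * q1) / g q1) / 2).
  assert (Hb0 : b0 * g q1 = (g q1 + f (a * q1)) / 2) by (unfold b0; field; lra).
  assert (Hr : f (a * q1) / g q1 < 1)
    by (apply Rmult_lt_reg_r with (g q1); auto; unfold Rdiv; rewrite Rmult_assoc, Rinv_l; lra).
  assert (0 <= f (a * q1) / g q1) by (apply Rdiv_le_0_compat; lra).
  apply (crossing_ge3_of_alternating f g a b0 0 q1 x0 (/ a)); unfold dil; auto; try lra.
  - unfold b0; lra.
  - rewrite Rmult_0_r, (Dbreve_0 f Hf), (Dbreve_0 g Hg); unfold b0; lra.
  - assert (0 <= g x0) by (apply (Dbreve_range g Hg); split; lra).
    assert (b0 * g x0 <= g x0) by (unfold b0; nra).
    lra.
  - rewrite Rinv_r, (Dbreve_1 f Hf) by lra.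
    assert (0 < g (/ a)) by (apply (Dbreve_pos g Hg); split; [left; apply Rinv_0_lt_compat|]; lra).
    assert (0 < b0) by (unfold b0; lra).
    nra.
Qed.

(* If [f] exceeded [g] at [x] after rescaling by the strides, then a slightly larger
   dilation [a = t / (stride g x)] of [f] still exceeds [g] at [stride g x]. *)
Lemma dil_stride_le f g : Dbreve f -> Dbreve g -> (forall x, I01 x -> g x <= f x) ->
  ~ crossing_ge f g 3 -> 0 < stride g ->
  forall x, 0 <= x <= / stride f -> dil f (stride f) x <= dil g (stride g) x.
Proof.
  intros Hf Hg Hgf Hnc Hsg x Hx; unfold dil; apply Rnot_lt_le; intros Hlt.
  pose proof (stride_le_of_le f g Hf Hg Hgf) as Hle.
  set (sf := stride f) in *; set (sg := stride g) in *.
  assert (Hsfx : sf * x <= 1)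
    by (rewrite <- (Rinv_r sf) by lra; apply Rmult_le_compat_l; lra).
  assert (Hx0 : 0 < x).
  { destruct Hx as [[Hx|<-] _]; auto.
    rewrite !Rmult_0_r, (Dbreve_0 f Hf), (Dbreve_0 g Hg) in Hlt; lra. }
  assert (Hsfx1 : sf * x < 1).
  { destruct Hsfx as [|E]; auto; rewrite E, (Dbreve_1 f Hf) in Hlt.
    pose proof (Dbreve_range g Hg (sg * x) ltac:(split; nra)); lra. }
  destruct (continuity_pt_gt_near (ext01 f) (sf * x) (g (sg * x)) (Dbreve_cont f Hf _))
    as [d [Hd Hnear]]; [rewrite ext01_id by (split; nra); lra|].
  pose proof (Rmin_l d (1 - sf * x)); pose proof (Rmin_r d (1 - sf * x)).
  assert (0 < Rmin d (1 - sf * x)) by (apply Rmin_pos; lra).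
  set (t := sf * x + Rmin d (1 - sf * x) / 2) in *.
  assert (Hft : g (sg * x) < f t).
  { rewrite <- (ext01_id f t) by (unfold t; split; nra).
    apply Hnear; unfold t; rewrite Rabs_right; lra. }
  assert (Hsgx : 0 < sg * x) by nra.
  set (a := t / (sg * x)).
  assert (Ha : a * (sg * x) = t) by (unfold a; field; split; apply Rgt_not_eq; nra).
  assert (Ha1 : 1 < a) by (unfold t in Ha; nra).
  apply Hnc, (crossing_ge3_of_dil_gt f g a (sg * x)); auto.
  - fold sf sg; apply Rmult_lt_reg_r with x; [lra|].
    replace (a * sg * x) with t by (rewrite <- Ha; ring); unfold t; lra.
  - split; [exact Hsgx|]; apply Rmult_lt_reg_l with a; [lra|].
    rewrite Rinv_r by lra; unfold t in Ha; lra.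
  - rewrite Ha; exact Hft.
Qed.

(** * Integrals *)

Lemma ex_RInt_Dbreve_dil g r a b : Dbreve g -> 0 <= r -> 0 <= a <= b -> r * b <= 1 ->
  ex_RInt (fun x => g (r * x)) a b.
Proof.
  intros Hg Hr Hab Hrb; apply (ex_RInt_ext (fun x => ext01 g (r * x))).
  - intros x Hx; rewrite Rmin_left, Rmax_right in Hx by lra.
    apply ext01_id; split; nra.
  - apply (ex_RInt_continuous (V := R_CompleteNormedModule)); intros z _.
    apply continuity_pt_filterlim, Dbreve_dil_cont, Hg.
Qed.

Lemma ex_RInt_Dbreve g a b : Dbreve g -> 0 <= a <= b -> b <= 1 -> ex_RInt g a b.
Proof.
  intros Hg Hab Hb; apply (ex_RInt_ext (fun x => g (1 * x))).
  - intros x _; rewrite Rmult_1_l; reflexivity.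
  - apply ex_RInt_Dbreve_dil; auto; lra.
Qed.

Lemma RInt_Dbreve_dil g r : Dbreve g -> 0 <= r <= 1 ->
  RInt g 0 r = r * RInt (fun x => g (r * x)) 0 1.
Proof.
  intros Hg Hr.
  assert (Hex : ex_RInt g (r * 0 + 0) (r * 1 + 0))
    by (rewrite Rmult_0_r, Rmult_1_r, !Rplus_0_r; apply ex_RInt_Dbreve; auto; lra).
  rewrite <- (Rmult_1_r r) at 1; rewrite <- (Rplus_0_r (r * 1)), <- (Rmult_0_r r) at 1.
  rewrite <- (Rplus_0_r (r * 0)) at 1.
  rewrite <- (RInt_comp_lin g r 0 0 1 Hex).
  rewrite (RInt_ext _ (fun y => scal r (g (r * y)))) by (intros; rewrite Rplus_0_r; reflexivity).
  apply (RInt_scal (V := R_CompleteNormedModule)), ex_RInt_Dbreve_dil; auto; lra.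
Qed.

Lemma RInt_Dbreve_pos g r : Dbreve g -> 0 <= r < 1 -> 0 < RInt g r 1.
Proof.
  intros Hg Hr.
  rewrite (RInt_ext g (ext01 g)).
  - apply RInt_gt_0; [lra | |].
    + intros x Hx; rewrite ext01_id by (split; lra); apply (Dbreve_pos g Hg); lra.
    + intros x _; apply continuity_pt_filterlim, Dbreve_cont, Hg.
  - intros x Hx; rewrite Rmin_left, Rmax_right in Hx by lra.
    symmetry; apply ext01_id; split; lra.
Qed.

Lemma Rdiv_le_inv x s : 0 < s -> 0 <= x <= 1 -> 0 <= x / s <= / s.
Proof.
  intros Hs Hx; split; [apply Rdiv_le_0_compat; lra|].
  unfold Rdiv; rewrite <- (Rmult_1_l (/ s)) at 2.
  apply Rmult_le_compat_r; [left; apply Rinv_0_lt_compat|]; lra.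
Qed.

(* With [r = sg / sf]: [int f <= int_0^1 g(r x) = (1/r) int_0^r g < (1/r) int_0^1 g]. *)
Lemma stride_integral_lt f g sf sg : Dbreve f -> Dbreve g -> 0 < sg -> sg < sf ->
  (forall x, 0 <= x <= / sf -> dil f sf x <= dil g sg x) ->
  sg * RInt f 0 1 < sf * RInt g 0 1.
Proof.
  intros Hf Hg Hsg Hsgf Hle.
  set (r := sg / sf).
  assert (Hr : 0 < r < 1).
  { unfold r; split; [apply Rdiv_lt_0_compat; lra|].
    apply Rmult_lt_reg_r with sf; [lra|]; unfold Rdiv; rewrite Rmult_assoc, Rinv_l; lra. }
  assert (Hfg : RInt f 0 1 <= RInt (fun x => g (r * x)) 0 1).
  { apply RInt_le; [lra | apply ex_RInt_Dbreve; auto; lra |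
      apply ex_RInt_Dbreve_dil; auto; lra |].
    intros x Hx; specialize (Hle (x / sf)); unfold dil in Hle.
    replace (sf * (x / sf)) with x in Hle by (field; lra).
    replace (sg * (x / sf)) with (r * x) in Hle by (unfold r; field; lra).
    apply Hle, Rdiv_le_inv; lra. }
  assert (Hsplit : RInt g 0 1 = RInt g 0 r + RInt g r 1)
    by (symmetry; apply (RInt_Chasles g 0 r 1); apply ex_RInt_Dbreve; auto; lra).
  rewrite Hsplit, (RInt_Dbreve_dil g r) by (auto; lra).
  pose proof (RInt_Dbreve_pos g r Hg ltac:(lra)).
  replace sg with (sf * r) by (unfold r; field; lra).
  rewrite Rmult_assoc; apply Rmult_lt_compat_l; [lra|].
  assert (r * RInt f 0 1 <= r * RInt (fun x => g (r * x)) 0 1)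
    by (apply Rmult_le_compat_l; lra).
  lra.
Qed.

Theorem lemma4p3 (f g : R -> R) :
  Dbreve f -> Dbreve g -> dominated g f -> 0 < stride g ->
  (forall x, 0 <= x <= / stride f ->
     dil f (stride f) x <= dil g (stride g) x) /\
  stride g * RInt f 0 1 < stride f * RInt g 0 1.
Proof.
  intros Hf Hg [[Hcross2 Hncross3] Hgf] Hsg.
  pose proof (dil_stride_le f g Hf Hg Hgf Hncross3 Hsg) as Hdil.
  split; [exact Hdil|].
  apply stride_integral_lt; auto.
  destruct (stride_le_of_le f g Hf Hg Hgf) as [Hlt|Heq]; [exact Hlt|].
  exfalso; apply Hncross3, crossing_ge3_of_ge2_eq; auto.
  intros x Hx; apply Rle_antisym; [|apply Hgf; auto]; destruct Hx as [Hx0 Hx1].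
  specialize (Hdil (x / stride f)); unfold dil in Hdil; rewrite <- Heq in Hdil.
  replace (stride g * (x / stride g)) with x in Hdil by (field; lra).
  apply Hdil, Rdiv_le_inv; lra.
Qed.
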